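(* Let $N$ be a nonnegative integer and $m\in\{0,1,\dots,N\}$. Then for all $x\in\mathbb{C}$: $$K_{2m}(x+N+1;\tfrac12,2N+1)=\frac{(\frac12)_m}{(-N-\frac12)_m}\,R_m(x(x+1);-\tfrac12,\tfrac12,N),$$ $$K_{2m+1}(x+N+1;\tfrac12,2N+1)=\frac{(\frac32)_m}{(-N-\frac12)_{m+1}}\,(x+\tfrac12)\,R_m(x(x+1);\tfrac12,-\tfrac12,N).$$
   Context: $(c)_k=c(c+1)\cdots(c+k-1)$. Krawtchouk polynomials: $K_n(x;p,N)={}_2F_1(-n,-x;-N;p^{-1})=\sum_{k=0}^n\frac{(-n)_k(-x)_k}{(-N)_k\,k!}p^{-k}$. Dual Hahn polynomials: $R_n(y(y+\gamma+\delta+1);\gamma,\delta,N)={}_3F_2(-n,-y,y+\gamma+\delta+1;\gamma+1,-N;1)$, regarded as a polynomial in $\lambda=y(y+\gamma+\delta+1)$; here $\gamma+\delta+1=1$, so $R_m(x(x+1);\gamma,\delta,N)={}_3F_2(-m,-x,x+1;\gamma+1,-N;1)$. *)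

(* The complex numbers are modelled by an arbitrary
   numClosedFieldType (algebraically closed numeric field, e.g. algC). *)
From HB Require Import structures.
From mathcomp Require Import all_boot all_order all_algebra.
Set Implicit Arguments. Unset Strict Implicit. Unset Printing Implicit Defensive.
Import Order.TTheory GRing.Theory Num.Theory.
Local Open Scope ring_scope.

Definition poch (R : nzRingType) (c : R) (k : nat) : R :=
  \prod_(i < k) (c + i%:R).

(* Krawtchouk polynomial K_n(x; p, N) = 2F1(-n, -x; -N; 1/p)
   = sum_{k=0}^n (-n)_k (-x)_k / ((-N)_k k!) p^{-k}. *)
Definition krawtchouk (R : fieldType) (n : nat) (x p : R) (N : nat) : R :=
  \sum_(k < n.+1)
     poch (- n%:R) k * poch (- x) k / (poch (- N%:R) k * k`!%:R) * p^-1 ^+ k.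

(* Dual Hahn polynomial R_n(y(y+g+d+1); g, d, N)
   = 3F2(-n, -y, y+g+d+1; g+1, -N; 1), given through the parameter y. *)
Definition dualHahn (R : fieldType) (n : nat) (y g d : R) (N : nat) : R :=
  \sum_(k < n.+1)
     poch (- n%:R) k * poch (- y) k * poch (y + g + d + 1) k
       / (poch (g + 1) k * poch (- N%:R) k * k`!%:R).

(* For p = 1/2 the Krawtchouk polynomials satisfy the three-term recurrence
   (M - n) K_(n+1) = (M - 2y) K_n - n K_(n-1) in the degree n.  With
   y = x + N + 1 and M = 2N + 1 the claimed closed forms satisfy the same
   recurrence: at even n this is the contiguous relation of
   F_c(m) = 3F2(-m, -x, x+1; c, -N; 1) between c = 1/2 and c = 3/2, at odd n
   the one raising the degree m.  Both sequences start at 1 and M - n does not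
   vanish for n < M, so they agree for n <= 2N + 1. *)

From mathcomp Require Import all_boot all_algebra.
From mathcomp Require Import ring zify.
Set Implicit Arguments.
Unset Strict Implicit.
Unset Printing Implicit Defensive.
Import GRing.Theory Num.Theory.
Local Open Scope ring_scope.

Section Pochhammer.
Variable R : nzRingType.
Implicit Types c : R.

Lemma poch0 c : poch c 0 = 1.
Proof. by rewrite /poch big_ord0. Qed.

Lemma pochSr c k : poch c k.+1 = poch c k * (c + k%:R).
Proof. by rewrite /poch big_ord_recr. Qed.

Lemma pochSl c k : poch c k.+1 = c * poch (c + 1) k.
Proof.
rewrite /poch big_ord_recl addr0; congr (_ * _).
by apply: eq_bigr => i _; rewrite /= -nat1r addrA.
Qed.

Lemma poch_succ c k : c * poch (c + 1) k = poch c k * (c + k%:R).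
Proof. by rewrite -pochSl pochSr. Qed.

Lemma poch_Nnat_eq0 n k : (n < k)%N -> poch (- n%:R : R) k = 0.
Proof.
elim: k => // k IHk; rewrite ltnS leq_eqVlt pochSr => /predU1P[-> | /IHk ->].
  by rewrite addNr mulr0.
by rewrite mul0r.
Qed.

End Pochhammer.

Lemma poch_Npred (R : comNzRingType) m k :
  m%:R * poch (- m.-1%:R : R) k = (m%:R - k%:R) * poch (- m%:R) k.
Proof.
case: m => [|m].
  case: k => [|k]; first by rewrite !poch0 subrr !mul0r.
  by rewrite !mul0r [poch (- 0%:R) _]pochSl oppr0 mul0r mulr0.
have := @pochSl R (- m.+1%:R) k; rewrite pochSr.
rewrite (_ : - m.+1%:R + 1 = - m%:R :> R); last by rewrite -natr1; ring.
move=> e /=; transitivity (- (- m.+1%:R * poch (- m%:R : R) k)); first ring.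
by rewrite -e; ring.
Qed.

Lemma poch_neq0 (R : idomainType) (c : R) k :
  (forall i, (i < k)%N -> c + i%:R != 0) -> poch c k != 0.
Proof. by move=> nz; apply/prodf_neq0 => i _; exact: nz. Qed.

Lemma poch_Nnat_neq0 (R : numDomainType) n k :
  (k <= n)%N -> poch (- n%:R : R) k != 0.
Proof.
move=> lekn; apply: poch_neq0 => i ltik.
by rewrite addrC subr_eq0 eqr_nat ltn_eqF // (leq_trans ltik).
Qed.

Lemma natrB_half_neq0 (R : numFieldType) a b : (a%:R - b%:R - 2^-1 : R) != 0.
Proof.
apply/eqP => eq0.
have : (2 * a)%N%:R - (2 * b + 1)%N%:R = 2 * (a%:R - b%:R - 2^-1) :> R.
  by rewrite natrD !natrM; field.
by rewrite eq0 mulr0 => /eqP; rewrite subr_eq0 eqr_nat => /eqP; lia.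
Qed.

Lemma sumr_ord_widen0 (V : nmodType) (F : nat -> V) a b : (a <= b)%N ->
  (forall k, (a <= k)%N -> F k = 0) -> \sum_(k < a) F k = \sum_(k < b) F k.
Proof.
move=> leab F0; rewrite (big_ord_widen b F leab) big_mkcond /=.
by apply: eq_bigr => i _; case: ltnP => // /F0.
Qed.

Lemma three_term_rec_uniq (R : idomainType) (a : nat -> R)
    (f : nat -> R -> R -> R) (u v : nat -> R) L :
  (forall n, (n < L)%N -> a n != 0) ->
  (forall n, (n < L)%N -> a n * u n.+1 = f n (u n) (u n.-1)) ->
  (forall n, (n < L)%N -> a n * v n.+1 = f n (v n) (v n.-1)) ->
  u 0%N = v 0%N -> forall n, (n <= L)%N -> u n = v n.
Proof.
move=> a_neq0 urec vrec uv0.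
suff uv n : (n <= L)%N -> u n = v n /\ u n.-1 = v n.-1 by move=> n /uv[].
elim: n => [|n IHn] ltnL; first by split.
have [uvn uvn1] := IHn (ltnW ltnL).
split=> //; apply: (mulfI (a_neq0 n ltnL)).
by rewrite urec // vrec // uvn uvn1.
Qed.

Section KrawtchoukHalf.
Variable R : numFieldType.
Variables (y : R) (M : nat).

Let t k := poch (- y) k / (poch (- M%:R) k * k`!%:R) * 2 ^+ k.

Let krawtchouk_halfE n :
  krawtchouk n y 2^-1 M = \sum_(k < n.+1) poch (- n%:R) k * t k.
Proof.
by rewrite /krawtchouk invrK; apply: eq_bigr => k _; rewrite /t !mulrA.
Qed.

Let t_succ k : (k < M)%N ->
  (M%:R - 2 * y) * t k
  = (M%:R - 2 * k%:R) * t k + (k%:R - M%:R) * k.+1%:R * t k.+1.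
Proof.
move=> ltkM.
have pochM_neq0 := @poch_Nnat_neq0 R M k (ltnW ltkM).
have kM_neq0 : - M%:R + k%:R != 0 :> R.
  by rewrite addrC subr_eq0 eqr_nat ltn_eqF.
have fact_neq0 : k`!%:R != 0 :> R by rewrite pnatr_eq0 -lt0n fact_gt0.
have k1_neq0 : k.+1%:R != 0 :> R by rewrite pnatr_eq0.
rewrite /t !pochSr factS natrM exprS.
by field; rewrite fact_neq0 nat1r k1_neq0 kM_neq0 pochM_neq0.
Qed.

Let coef_rec n k :
  poch (- n%:R : R) k * (M%:R - 2 * k%:R)
    + poch (- n%:R) k.-1 * (k.-1%:R - M%:R) * k%:R
  = (M%:R - n%:R) * poch (- n.+1%:R) k + n%:R * poch (- n.-1%:R) k.
Proof.
rewrite poch_Npred; case: k => [|k]; first by rewrite !poch0 /=; ring.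
rewrite [poch (- n.+1%:R) _]pochSl.
rewrite (_ : - n.+1%:R + 1 = - n%:R :> R); last by rewrite -natr1; ring.
rewrite [poch (- n%:R) k.+1]pochSr /=.
by move: (poch (- n%:R : R) k) => P; rewrite -!natr1; ring.
Qed.

Lemma krawtchouk_half_rec n : (n < M)%N ->
  (M%:R - n%:R) * krawtchouk n.+1 y 2^-1 M
  = (M%:R - 2 * y) * krawtchouk n y 2^-1 M - n%:R * krawtchouk n.-1 y 2^-1 M.
Proof.
move=> ltnM.
have widen j : (j <= n.+1)%N ->
    \sum_(k < j.+1) poch (- j%:R) k * t k
    = \sum_(k < n.+2) poch (- j%:R) k * t k.
  move=> lejn.
  apply: (@sumr_ord_widen0 R (fun k => poch (- j%:R) k * t k)) => // k ltjk.
  by rewrite poch_Nnat_eq0 ?mul0r.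
rewrite !krawtchouk_halfE (widen n) // (widen n.-1); last lia.
(* Split (M - 2y) t_k by [t_succ] and shift the index of the t_(k+1) part:
   the coefficient of each t_k becomes the left side of [coef_rec]. *)
pose G k := poch (- n%:R : R) k.-1 * (k.-1%:R - M%:R) * k%:R * t k.
have shifted : (M%:R - 2 * y) * \sum_(k < n.+2) poch (- n%:R) k * t k
    = \sum_(k < n.+2) (poch (- n%:R) k * (M%:R - 2 * k%:R) * t k + G k.+1).
  rewrite mulr_sumr; apply: eq_bigr => [[k ltkn]] _ /=; rewrite /G /=.
  have [lekn | ltnk] := ltnP k n.+1.
    by rewrite mulrCA t_succ ?(leq_trans lekn) //; ring.
  by rewrite poch_Nnat_eq0 // !mul0r mulr0 addr0.
have G0 : G 0%N = 0 by rewrite /G mulr0 mul0r.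
have Gn2 : G n.+2 = 0 by rewrite /G poch_Nnat_eq0 // !mul0r.
have shiftG : \sum_(k < n.+2) G k.+1 = \sum_(k < n.+2) G k.
  transitivity (\sum_(k < n.+3) G k).
    by rewrite [RHS]big_ord_recl /= G0 add0r.
  by rewrite big_ord_recr /= Gn2 addr0.
rewrite shifted big_split /= shiftG -big_split /=.
rewrite !mulr_sumr -sumrB; apply: eq_bigr => k _; rewrite /G.
transitivity
  (((M%:R - n%:R) * poch (- n.+1%:R) k + n%:R * poch (- n.-1%:R) k) * t k
   - n%:R * (poch (- n.-1%:R) k * t k)); first ring.
by rewrite -coef_rec; ring.
Qed.

End KrawtchoukHalf.

(* [dualHahn0 m x c N] is R_m(x(x+1); c - 1, 1 - c, N). *)
Definition dualHahn0 (R : fieldType) (m : nat) (x c : R) (N : nat) : R :=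
  \sum_(k < m.+1)
     poch (- m%:R) k * poch (- x) k * poch (x + 1) k
       / (poch c k * poch (- N%:R) k * k`!%:R).

Lemma dualHahn_oppE (R : fieldType) m (x g : R) N :
  dualHahn m x g (- g) N = dualHahn0 m x (g + 1) N.
Proof. by rewrite /dualHahn addrK. Qed.

Section DualHahnContiguity.
Variable R : numFieldType.
Variables (x c : R) (N : nat).
Hypothesis cD_neq0 : forall i, c + i%:R != 0.

Let w k := poch (- x) k * poch (x + 1) k / (poch (- N%:R) k * k`!%:R).

Let dualHahn0E m d :
  dualHahn0 m x d N = \sum_(k < m.+1) poch (- m%:R) k / poch d k * w k.
Proof. by apply: eq_bigr => k _; rewrite /w !invfM; ring. Qed.

Let widen d m j : (m <= j)%N ->
  \sum_(k < m.+1) poch (- m%:R) k / poch d k * w k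
  = \sum_(k < j.+1) poch (- m%:R) k / poch d k * w k.
Proof.
move=> lemj.
apply: (@sumr_ord_widen0 R (fun k => poch (- m%:R) k / poch d k * w k)) => //.
by move=> k ltmk; rewrite poch_Nnat_eq0 // !mul0r.
Qed.

Let w_succ k : (k < N)%N ->
  x * (x + 1) * w k = k%:R * k.+1%:R * w k - (k%:R - N%:R) * k.+1%:R * w k.+1.
Proof.
move=> ltkN.
have pochN_neq0 := @poch_Nnat_neq0 R N k (ltnW ltkN).
have kN_neq0 : - N%:R + k%:R != 0 :> R.
  by rewrite addrC subr_eq0 eqr_nat ltn_eqF.
have fact_neq0 : k`!%:R != 0 :> R by rewrite pnatr_eq0 -lt0n fact_gt0.
have k1_neq0 : k.+1%:R != 0 :> R by rewrite pnatr_eq0.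
rewrite /w !pochSr factS natrM.
by field; rewrite fact_neq0 nat1r k1_neq0 kN_neq0 pochN_neq0.
Qed.

Let pochc_neq0 k : poch c k != 0.
Proof. exact: poch_neq0. Qed.

Let pochc1_neq0 k : poch (c + 1) k != 0.
Proof. by apply: poch_neq0 => i _; rewrite -addrA (addrC 1) natr1. Qed.

Lemma dualHahn0_param_rec m :
  (c + m%:R) * dualHahn0 m x (c + 1) N
  = c * dualHahn0 m x c N + m%:R * dualHahn0 m.-1 x (c + 1) N.
Proof.
rewrite !dualHahn0E (widen (c + 1) (leq_pred m)) !mulr_sumr -big_split /=.
apply: eq_bigr => k _.
have cE : c / poch c k = (c + k%:R) / poch (c + 1) k.
  by apply/eqP; rewrite eqr_div ?pochc_neq0 ?pochc1_neq0 // poch_succ mulrC.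
transitivity (c / poch c k * poch (- m%:R) k * w k
  + m%:R * poch (- m.-1%:R) k / poch (c + 1) k * w k); last by ring.
by rewrite cE poch_Npred; ring.
Qed.

Let coef_deg_rec m k :
  c * (m%:R - N%:R) * (poch (- m.+1%:R) k / poch c k)
  = poch (- m%:R) k / poch (c + 1) k * k%:R * k.+1%:R
    - poch (- m%:R) k.-1 / poch (c + 1) k.-1 * (k.-1%:R - N%:R) * k%:R
    + c * (1 - c) * (poch (- m%:R) k / poch (c + 1) k)
    + c * (m%:R + c - N%:R - 1) * (poch (- m%:R) k / poch c k).
Proof.
case: k => [|j]; first by rewrite /= !poch0; field.
rewrite [poch (- m.+1%:R) _]pochSl.
rewrite (_ : - m.+1%:R + 1 = - m%:R :> R); last by rewrite -natr1; ring.
rewrite [poch c _]pochSl [poch (- m%:R) j.+1]pochSr.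
rewrite [poch (c + 1) j.+1]pochSr /=.
have c_neq0 : c != 0 by have := cD_neq0 0; rewrite addr0.
have := pochc1_neq0 j; have := cD_neq0 j.+1.
move: (poch (- m%:R : R) j) (poch (c + 1) j) => P B cj_neq0 B_neq0.
rewrite -!natr1; field.
by rewrite B_neq0 c_neq0 -addrA (addrC 1) natr1.
Qed.

Lemma dualHahn0_deg_rec m : (m < N)%N ->
  c * (m%:R - N%:R) * dualHahn0 m.+1 x c N
  = (x + c) * (x + 1 - c) * dualHahn0 m x (c + 1) N
    + c * (m%:R + c - N%:R - 1) * dualHahn0 m x c N.
Proof.
move=> ltmN.
pose G k :=
  poch (- m%:R) k.-1 / poch (c + 1) k.-1 * (k.-1%:R - N%:R) * k%:R * w k.
have G0 : G 0%N = 0 by rewrite /G mulr0 mul0r.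
have xB : x * (x + 1) * dualHahn0 m x (c + 1) N
    = \sum_(k < m.+2)
        (poch (- m%:R) k / poch (c + 1) k * k%:R * k.+1%:R * w k - G k).
  transitivity (\sum_(k < m.+1)
      (poch (- m%:R) k / poch (c + 1) k * k%:R * k.+1%:R * w k - G k.+1)).
    rewrite dualHahn0E mulr_sumr; apply: eq_bigr => [[k ltkm]] _ /=.
    by rewrite mulrCA w_succ ?(leq_trans ltkm) // /G /=; ring.
  rewrite sumrB [RHS]sumrB [X in _ = _ - X]big_ord_recl /= G0 add0r.
  congr (_ - _).
  apply: (@sumr_ord_widen0 R
    (fun k => poch (- m%:R) k / poch (c + 1) k * k%:R * k.+1%:R * w k)) => //.
  by move=> k ltmk; rewrite poch_Nnat_eq0 // !mul0r.
rewrite (_ : (x + c) * (x + 1 - c) = x * (x + 1) + c * (1 - c)); last by ring.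
rewrite mulrDl xB !dualHahn0E (widen c (leqnSn m)) (widen (c + 1) (leqnSn m)).
rewrite !mulr_sumr -!big_split /=; apply: eq_bigr => k _; rewrite /G.
transitivity (c * (m%:R - N%:R) * (poch (- m.+1%:R) k / poch c k) * w k).
  by ring.
by rewrite coef_deg_rec; ring.
Qed.

End DualHahnContiguity.

Section KrawtchoukAsDualHahn.
Variable R : numFieldType.
Variables (x c : R) (N : nat).
(* [c] stands for -N - 1/2; as a variable it stays an atom for [field]. *)
Hypothesis Nc : N%:R = - c - 2^-1.

Local Notation A m := (dualHahn0 m x 2^-1 N).
Local Notation B m := (dualHahn0 m x (2^-1 + 1) N).

Let even_rhs m := poch 2^-1 m / poch c m * A m.
Let odd_rhs m := poch (2^-1 + 1) m / poch c m.+1 * (x + 2^-1) * B m.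

Let h_neq0 : 2^-1 != 0 :> R.
Proof. by rewrite invr_eq0 pnatr_eq0. Qed.

Let hD_neq0 i : 2^-1 + i%:R != 0 :> R.
Proof.
rewrite (_ : _ + _ = i.+1%:R - 0%:R - 2^-1) ?natrB_half_neq0 //.
by rewrite -natr1; field.
Qed.

Let cD_neq0 i : c + i%:R != 0.
Proof.
rewrite (_ : _ + _ = i%:R - N%:R - 2^-1) ?natrB_half_neq0 //.
by rewrite Nc; field.
Qed.

Let pochc_neq0 k : poch c k != 0.
Proof. exact: poch_neq0. Qed.

Let rhs_rec0 : - 2 * c * odd_rhs 0 = - (2 * x + 1) * even_rhs 0.
Proof.
have BA : B 0 = A 0.
  have := dualHahn0_param_rec x N hD_neq0 0.
  by rewrite mulr0n mul0r !addr0 => /(mulfI h_neq0).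
have := cD_neq0 0; rewrite mulr0n addr0 => c_neq0.
by rewrite /even_rhs /odd_rhs BA pochSr !poch0 mulr0n addr0 mul1r; field.
Qed.

Let rhs_rec_double m :
  - 2 * (c + m.+1%:R) * odd_rhs m.+1
  = - (2 * x + 1) * even_rhs m.+1 - 2 * m.+1%:R * odd_rhs m.
Proof.
have AE : A m.+1 = ((2^-1 + m.+1%:R) * B m.+1 - m.+1%:R * B m) / 2^-1.
  by rewrite (dualHahn0_param_rec x N hD_neq0 m.+1); field.
rewrite /even_rhs /odd_rhs AE [poch 2^-1 _]pochSl.
rewrite [poch (2^-1 + 1) m.+1]pochSr [poch c m.+2]pochSr.
have := cD_neq0 m.+1; have := pochc_neq0 m.+1.
move: (poch c m.+1) (poch (2^-1 + 1) m) => Q P Q_neq0 cm_neq0.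
by field; rewrite Q_neq0 (addrC 1) natr1.
Qed.

Let rhs_rec_double1 m : (m < N)%N ->
  - (2 * (c + m%:R) + 1) * even_rhs m.+1
  = - (2 * x + 1) * odd_rhs m - (2 * m%:R + 1) * even_rhs m.
Proof.
move=> ltmN.
have P32 : poch (2^-1 + 1) m = poch 2^-1 m * (2^-1 + m%:R) / 2^-1 :> R.
  by rewrite -poch_succ; field.
have Q_neq0 := pochc_neq0 m; have cm_neq0 := cD_neq0 m.
have -> : - (2 * (c + m%:R) + 1) * even_rhs m.+1
    = - 4 * (2^-1 * (m%:R - N%:R) * A m.+1) * poch 2^-1 m * (2^-1 + m%:R)
      / (poch c m * (c + m%:R)).
  rewrite /even_rhs [poch 2^-1 m.+1]pochSr [poch c m.+1]pochSr Nc.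
  by field; rewrite cm_neq0 Q_neq0.
rewrite (dualHahn0_deg_rec x hD_neq0 ltmN) /even_rhs /odd_rhs P32.
rewrite [poch c m.+1]pochSr Nc.
move: (poch c m) (poch 2^-1 m) Q_neq0 => Q H Q_neq0.
by field; rewrite Q_neq0 cm_neq0.
Qed.

Let rhs n := if odd n then odd_rhs n./2 else even_rhs n./2.

Let rhs_double m : rhs m.*2 = even_rhs m.
Proof. by rewrite /rhs odd_double doubleK. Qed.

Let rhs_double1 m : rhs m.*2.+1 = odd_rhs m.
Proof. by rewrite /rhs /= odd_double uphalf_double. Qed.

Let rhs_rec n : (n < 2 * N + 1)%N ->
  ((2 * N + 1)%N%:R - n%:R) * rhs n.+1
  = ((2 * N + 1)%N%:R - 2 * (x + N%:R + 1)) * rhs n - n%:R * rhs n.-1.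
Proof.
have -> : (2 * N + 1)%N%:R = - 2 * c :> R by rewrite natrD natrM Nc; field.
have -> : - 2 * c - 2 * (x + N%:R + 1) = - (2 * x + 1) by rewrite Nc; field.
rewrite -[n]odd_double_half; case: (odd n); move: n./2 => m.
  rewrite add1n => ltnN; have ltmN : (m < N)%N by rewrite -mul2n in ltnN; lia.
  rewrite -doubleS rhs_double rhs_double1 rhs_double.
  rewrite -[(m.*2.+1)%:R]natr1 -mul2n natrM.
  by rewrite -(rhs_rec_double1 ltmN); congr (_ * _); ring.
rewrite add0n rhs_double1 rhs_double; case: m => [|m] _.
  by rewrite double0 /= mulr0n mul0r !subr0 rhs_rec0.
rewrite doubleS /= rhs_double1 -doubleS -mul2n natrM.
by rewrite -rhs_rec_double; congr (_ * _); ring.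
Qed.

Let krawtchouk_eq_rhs n : (n <= 2 * N + 1)%N ->
  krawtchouk n (x + N%:R + 1) 2^-1 (2 * N + 1) = rhs n.
Proof.
move=> leN.
apply: (@three_term_rec_uniq _ (fun n => (2 * N + 1)%N%:R - n%:R)
  (fun n p q => ((2 * N + 1)%N%:R - 2 * (x + N%:R + 1)) * p - n%:R * q)
  (fun n => krawtchouk n (x + N%:R + 1) 2^-1 (2 * N + 1)) rhs _ _ _ _ _ n leN).
- by move=> k ltk; rewrite subr_eq0 eqr_nat gtn_eqF.
- by move=> k ltk; apply: krawtchouk_half_rec.
- exact: rhs_rec.
- rewrite /rhs /even_rhs /krawtchouk /dualHahn0 /= !big_ord1 !poch0 /=.
  by rewrite fact0 expr0; field.
Qed.

Lemma krawtchouk_dualHahn_even m : (m <= N)%N ->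
  krawtchouk (2 * m) (x + N%:R + 1) 2^-1 (2 * N + 1)
  = poch 2^-1 m / poch c m * dualHahn0 m x 2^-1 N.
Proof.
by move=> leMN; rewrite krawtchouk_eq_rhs; [rewrite mul2n rhs_double | lia].
Qed.

Lemma krawtchouk_dualHahn_odd m : (m <= N)%N ->
  krawtchouk (2 * m + 1) (x + N%:R + 1) 2^-1 (2 * N + 1)
  = poch (2^-1 + 1) m / poch c m.+1 * (x + 2^-1) * dualHahn0 m x (2^-1 + 1) N.
Proof.
move=> leMN; rewrite krawtchouk_eq_rhs; last lia.
by rewrite addn1 mul2n rhs_double1.
Qed.

End KrawtchoukAsDualHahn.

Theorem mainTheorem17 (C : numClosedFieldType) (N m : nat) (hm : (m <= N)%N)
  (x : C) :
  krawtchouk (2 * m)%N (x + N%:R + 1) (2^-1) (2 * N + 1)%N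
    = poch (2^-1 : C) m / poch (- N%:R - 2^-1) m
        * dualHahn m x (- 2^-1) (2^-1) N
  /\
  krawtchouk (2 * m + 1)%N (x + N%:R + 1) (2^-1) (2 * N + 1)%N
    = poch (3 / 2 : C) m / poch (- N%:R - 2^-1) m.+1
        * (x + 2^-1) * dualHahn m x (2^-1) (- 2^-1) N.
Proof.
have Nc : N%:R = - (- N%:R - 2^-1) - 2^-1 :> C by ring.
rewrite (krawtchouk_dualHahn_even x Nc hm) (krawtchouk_dualHahn_odd x Nc hm).
rewrite -[X in dualHahn _ _ _ X]opprK !dualHahn_oppE.
have -> : - 2^-1 + 1 = 2^-1 :> C by field.
by have -> : 3 / 2 = 2^-1 + 1 :> C by field.
Qed.
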